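(* Let $m,n\in\mathbb N$, $M_A=M_m(\mathbb C)$, $M_B=M_n(\mathbb C)$, and let $U_A\in M_A$, $U_B\in M_B$ be unitary matrices. If a quantum $U_A\otimes U_B$-state $\rho\in M_A\otimes M_B$ is $U_A\otimes U_B$-separable, then $\rho$ is $U_A\otimes U_B$-positive partial transpose, i.e. $(\overline{U_A}\otimes U_B^* )\,\rho^{\tau}$ is positive semidefinite, where $\rho^\tau=(t\otimes\mathrm{id})(\rho)$, $t$ is the transpose on $M_A$, and $\overline{U_A}$ is the entrywise complex conjugate of $U_A$.
   Context: For a unitary $U\in M_k(\mathbb C)$, a matrix $X\in M_k(\mathbb C)$ is $U$-positive if $U^*X$ is positive semidefinite, and is a quantum $U$-state if moreover $\mathrm{Tr}(U^*X)=1$. A quantum $U_A\otimes U_B$-state $\rho\in M_A\otimes M_B$ is a product $U_A\otimes U_B$-state if $\rho=\rho_A\otimes\rho_B$ with $\rho_A\in M_A$ $U_A$-positive and $\rho_B\in M_B$ $U_B$-positive; it is $U_A\otimes U_B$-separable if it is a convex combination of product $U_A\otimes U_B$-states. *)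

(* Complex numbers are modelled as R[i] = complex R for an
   arbitrary R : realType (mathcomp-analysis); for R = the reals this is C. *)
From HB Require Import structures.
From mathcomp Require Import all_boot all_order all_algebra.
From mathcomp Require Import sesquilinear spectral.
From mathcomp Require Import complex mxtens.
From mathcomp Require Import reals.
Set Implicit Arguments. Unset Strict Implicit. Unset Printing Implicit Defensive.
Import Order.TTheory GRing.Theory Num.Theory.
Local Open Scope ring_scope.
Local Open Scope sesquilinear_scope.

Section QDefs.
Variable C : numClosedFieldType.

(* positive semidefinite: <v, A v> >= 0 for every vector v
   (over C, 0 <= z means z is real and nonnegative) *)
Definition psdmx k (A : 'M[C]_k) : Prop :=
  forall v : 'cV[C]_k, 0 <= (v ^t* *m A *m v) 0 0.

Definition U_positive k (U X : 'M[C]_k) : Prop := psdmx (U ^t* *m X).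

Definition U_state k (U X : 'M[C]_k) : Prop :=
  U_positive U X /\ \tr (U ^t* *m X) = 1.

Definition product_state m n (UA : 'M[C]_m) (UB : 'M[C]_n)
    (rho : 'M[C]_(m * n)) : Prop :=
  U_state (UA *t UB) rho /\
  exists (rA : 'M[C]_m) (rB : 'M[C]_n),
    [/\ rho = rA *t rB, U_positive UA rA & U_positive UB rB].

Definition separable m n (UA : 'M[C]_m) (UB : 'M[C]_n)
    (rho : 'M[C]_(m * n)) : Prop :=
  exists (K : nat) (p : 'I_K -> C) (sigma : 'I_K -> 'M[C]_(m * n)),
    [/\ forall i, 0 <= p i,
        \sum_i p i = 1,
        forall i, product_state UA UB (sigma i)
      & rho = \sum_i p i *: sigma i].

(* partial transpose (t (x) id) on M_m (x) M_n, w.r.t. the tensmx indexing: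
   entry ((i,j),(k,l)) of rho^tau is entry ((k,j),(i,l)) of rho *)
Definition ptrans m n (rho : 'M[C]_(m * n)) : 'M[C]_(m * n) :=
  \matrix_(a, b)
    rho (mxtens_index ((mxtens_unindex b).1, (mxtens_unindex a).2))
        (mxtens_index ((mxtens_unindex a).1, (mxtens_unindex b).2)).

Definition conjmx_entry k (U : 'M[C]_k) : 'M[C]_k := map_mx Num.conj U.

End QDefs.

(* Partial transposition is linear, so by separability it suffices to treat a
   product state rA (x) rB, whose partial transpose is rA^T (x) rB; then
   (conj UA (x) UB^* ) (rA^T (x) rB) = (rA UA^* )^T (x) UB^* rB.  Here
   rA UA^* = UA (UA^* rA) UA^* is congruent to the positive matrix UA^* rA,
   transposition preserves positivity, and so does the tensor product:
   diagonalise the second factor by the spectral theorem, which applies since a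
   positive matrix over C is Hermitian by polarisation. *)

From HB Require Import structures.
From mathcomp Require Import all_boot all_order all_algebra.
From mathcomp Require Import sesquilinear spectral.
From mathcomp Require Import complex mxtens.
From mathcomp Require Import reals.
From mathcomp Require Import ring.
Set Implicit Arguments. Unset Strict Implicit. Unset Printing Implicit Defensive.
Import Order.TTheory GRing.Theory Num.Theory.
Local Open Scope ring_scope.
Local Open Scope sesquilinear_scope.

Fact tensmx_is_linear (R : comPzRingType) m n p q (A : 'M[R]_(m, n)) :
  linear (@tensmx R m n p q A).
Proof. by move=> c B1 B2; apply/matrixP => i j; rewrite !mxE mulrDr mulrCA. Qed.

HB.instance Definition _ (R : comPzRingType) m n p q (A : 'M[R]_(m, n)) :=
  GRing.isLinear.Build R 'M[R]_(p, q) 'M[R]_(m * p, n * q) *:%R (tensmx A)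
    (@tensmx_is_linear R m n p q A).

Fact ptrans_is_linear (C : numClosedFieldType) m n : linear (@ptrans C m n).
Proof. by move=> c A B; apply/matrixP => i j; rewrite !mxE. Qed.

HB.instance Definition _ (C : numClosedFieldType) m n :=
  GRing.isLinear.Build C 'M[C]_(m * n) 'M[C]_(m * n) *:%R (@ptrans C m n)
    (@ptrans_is_linear C m n).

Section PositiveSemidefinite.
Variable C : numClosedFieldType.

Definition formmx k (A : 'M[C]_k) (u v : 'cV[C]_k) : C := (u^t* *m A *m v) 0 0.

Lemma formmx_delta k (A : 'M[C]_k) i j :
  formmx A (delta_mx i 0) (delta_mx j 0) = A i j.
Proof.
rewrite /formmx; have -> : (delta_mx i 0 : 'cV[C]_k)^t* = delta_mx 0 i.
  by apply/matrixP => a b; rewrite !mxE conjC_nat andbC.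
by rewrite -(rowE i A) -colE !mxE.
Qed.

Lemma formmxDl k (A : 'M[C]_k) u1 u2 v :
  formmx A (u1 + u2) v = formmx A u1 v + formmx A u2 v.
Proof. by rewrite /formmx linearD /= map_mxD !mulmxDl mxE. Qed.

Lemma formmxDr k (A : 'M[C]_k) u v1 v2 :
  formmx A u (v1 + v2) = formmx A u v1 + formmx A u v2.
Proof. by rewrite /formmx !mulmxDr mxE. Qed.

Lemma formmxZl k (A : 'M[C]_k) c u v : formmx A (c *: u) v = c^* * formmx A u v.
Proof. by rewrite /formmx linearZ /= map_mxZ -!scalemxAl mxE. Qed.

Lemma formmxZr k (A : 'M[C]_k) c u v : formmx A u (c *: v) = c * formmx A u v.
Proof. by rewrite /formmx -!scalemxAr mxE. Qed.

Lemma formmx_adj k (A : 'M[C]_k) u v : formmx (A^t*) u v = (formmx A v u)^*.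
Proof.
have conj11 (M : 'M[C]_1) : (M 0 0)^* = M^t* 0 0 by rewrite !mxE.
by rewrite /formmx conj11 !trmx_mul !map_mxM trmxCK mulmxA.
Qed.

Lemma formmx_diag_inj k (A B : 'M[C]_k) :
  (forall v, formmx A v v = formmx B v v) -> A = B.
Proof.
move=> eqAB; apply/matrixP => i j; rewrite -!formmx_delta.
set ei := delta_mx i 0; set ej := delta_mx j 0.
have expand M c : formmx M (ei + c *: ej) (ei + c *: ej) =
    formmx M ei ei + c^* * c * formmx M ej ej
    + (c * formmx M ei ej + c^* * formmx M ej ei).
  by rewrite !formmxDl !formmxDr !formmxZl !formmxZr; ring.
have := eqAB (ei + 1 *: ej); have := eqAB (ei + 'i *: ej).
rewrite !expand !eqAB conjCi conjC1 => /addrI eq_i /addrI eq_1.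
apply: (@mulfI _ ('i * 2)); first by rewrite mulf_neq0 ?neq0Ci ?pnatr_eq0.
rewrite !mul1r in eq_1.
have twice_i M : 'i * 2 * formmx M ei ej =
    'i * (formmx M ei ej + formmx M ej ei)
    + ('i * formmx M ei ej + - 'i * formmx M ej ei) by ring.
by rewrite !twice_i eq_1 eq_i.
Qed.

Lemma psdmx_hermitian k (A : 'M[C]_k) : psdmx A -> A \is hermsymmx.
Proof.
move=> psdA; apply/is_hermitianmxP; rewrite expr0 scale1r.
apply: formmx_diag_inj => v; rewrite formmx_adj.
exact/esym/conj_Creal/ger0_real/psdA.
Qed.

Lemma psdmx_diag_ge0 k (A : 'M[C]_k) i : psdmx A -> 0 <= A i i.
Proof. by move=> psdA; rewrite -formmx_delta; apply: psdA. Qed.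

Lemma psdmx_congr k l (A : 'M[C]_k) (Q : 'M[C]_(k, l)) :
  psdmx A -> psdmx (Q^t* *m A *m Q).
Proof.
by move=> psdA v; have := psdA (Q *m v); rewrite trmx_mul map_mxM !mulmxA.
Qed.

Lemma psdmx0 k : psdmx (0 : 'M[C]_k).
Proof. by move=> v; rewrite mulmx0 mul0mx mxE. Qed.

Lemma psdmxD k (A B : 'M[C]_k) : psdmx A -> psdmx B -> psdmx (A + B).
Proof. by move=> psdA psdB v; rewrite mulmxDr mulmxDl mxE addr_ge0. Qed.

Lemma psdmxZ k c (A : 'M[C]_k) : 0 <= c -> psdmx A -> psdmx (c *: A).
Proof. by move=> c_ge0 psdA v; rewrite -scalemxAr -scalemxAl mxE mulr_ge0. Qed.

Lemma psdmx_sum I (r : seq I) (P : pred I) k (F : I -> 'M[C]_k) :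
  (forall i, P i -> psdmx (F i)) -> psdmx (\sum_(i <- r | P i) F i).
Proof.
by move=> psdF; elim/big_ind: _ => //; [exact: psdmx0 | exact: psdmxD].
Qed.

Lemma psdmx_castmx k k' (e : k = k') (A : 'M[C]_k) :
  psdmx A -> psdmx (castmx (e, e) A).
Proof. by case: k' / e; rewrite castmx_id. Qed.

Lemma psdmx_trmx k (A : 'M[C]_k) : psdmx A -> psdmx A^T.
Proof.
move=> psdA v; have := psdA (map_mx Num.conj v).
have -> : (map_mx Num.conj v)^t* = v^T
  by apply/matrixP => i j; rewrite !mxE conjCK.
have tr11 (M : 'M[C]_1) : M 0 0 = M^T 0 0 by rewrite mxE.
by rewrite [X in _ -> _ <= X]tr11 !trmx_mul trmxK map_trmx trmxK mulmxA.
Qed.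

Lemma trmxC_tens m n p q (A : 'M[C]_(m, n)) (B : 'M[C]_(p, q)) :
  (A *t B)^t* = A^t* *t B^t*.
Proof. by rewrite trmx_tens map_mxT. Qed.

Lemma psdmx_tens_delta m n (A : 'M[C]_m) (l : 'I_n) :
  psdmx A -> psdmx (A *t delta_mx l l).
Proof.
move=> psdA; have psdA1 : psdmx (A *t (1%:M : 'M[C]_1)).
  by rewrite tens_mx_scalar scale1r; apply: psdmx_castmx.
have := psdmx_congr (1%:M *t delta_mx 0 l) psdA1; rewrite trmxC_tens.
have -> : (delta_mx 0 l : 'M[C]_(1, n))^t* = delta_mx l 0.
  by apply/matrixP => i j; rewrite !mxE conjC_nat andbC.
by rewrite trmx1 map_mx1 !tensmx_mul mulmx1 !mul1mx mulmx1 mul_delta_mx.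
Qed.

Lemma psdmx_tens m n (A : 'M[C]_m) (B : 'M[C]_n) :
  psdmx A -> psdmx B -> psdmx (A *t B).
Proof.
move=> psdA psdB.
have /hermitian_normalmx/orthomx_spectralP := psdmx_hermitian psdB.
set P := spectralmx B; set d := spectral_diag B.
have P_unitary : P \is unitarymx := spectral_unitarymx B.
rewrite invmx_unitary // => defB.
have psdD : psdmx (diag_mx d).
  have := psdmx_congr (P^t*) psdB; rewrite trmxCK defB !mulmxA.
  by rewrite (unitarymxP P_unitary) mul1mx -mulmxA (unitarymxP P_unitary) mulmx1.
have -> : A *t B = (1%:M *t P)^t* *m (A *t diag_mx d) *m (1%:M *t P).
  by rewrite trmxC_tens trmx1 map_mx1 !tensmx_mul mulmx1 mul1mx -defB.
apply: psdmx_congr; rewrite diag_mx_sum_delta linear_sum; apply: psdmx_sum => l _.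
rewrite linearZ; apply: psdmxZ; last exact: psdmx_tens_delta.
by have := psdmx_diag_ge0 l psdD; rewrite mxE eqxx mulr1n.
Qed.

Lemma ptrans_tens m n (A : 'M[C]_m) (B : 'M[C]_n) :
  ptrans (A *t B) = A^T *t B.
Proof.
apply/matrixP => a b.
case: (mxtens_indexP a) => i j; case: (mxtens_indexP b) => k l.
by rewrite mxE !mxtens_indexK /= !tensmxE mxE.
Qed.

Lemma U_positive_conj_trmx k (U X : 'M[C]_k) :
  U \is unitarymx -> U_positive U X -> psdmx (conjmx_entry U *m X^T).
Proof.
move=> U_unitary psdUX.
have -> : conjmx_entry U *m X^T = (U^t*^t* *m (U^t* *m X) *m U^t*)^T.
  by rewrite trmxCK mulmxA (unitarymxP U_unitary) mul1mx trmx_mul map_trmx trmxK.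
exact/psdmx_trmx/psdmx_congr.
Qed.

End PositiveSemidefinite.

Theorem proposition5p7 (R : realType) (m n : nat)
    (UA : 'M[R[i]]_m) (UB : 'M[R[i]]_n) (rho : 'M[R[i]]_(m * n)) :
  UA \is unitarymx -> UB \is unitarymx ->
  U_state (UA *t UB) rho ->
  separable UA UB rho ->
  psdmx ((conjmx_entry UA *t UB ^t*) *m ptrans rho).
Proof.
move=> UA_unitary _ _ [K [p [sigma [p_ge0 _ sigma_product ->]]]].
rewrite linear_sum mulmx_sumr; apply: psdmx_sum => i _.
rewrite linearZ /= -scalemxAr; apply: psdmxZ (p_ge0 i) _.
have [_ [rA [rB [-> rA_pos rB_pos]]]] := sigma_product i.
rewrite ptrans_tens tensmx_mul.
exact: psdmx_tens (U_positive_conj_trmx UA_unitary rA_pos) rB_pos.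
Qed.
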